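(* Consider the semi-discrete scheme $\frac{d}{dt}\mathbf U_{i,j}=-\frac{\mathcal F_{i+\frac12,j}-\mathcal F_{i-\frac12,j}}{\Delta x}-\frac{\mathcal G_{i,j+\frac12}-\mathcal G_{i,j-\frac12}}{\Delta y}+\mathbf S_{i,j}$ with time-independent bottom values $\mathbf B_{i,j}$ and source $\mathbf S_{i,j}$ as in the context. Suppose the numerical fluxes $\mathcal F_{i+\frac12,j},\mathcal G_{i,j+\frac12}\in\mathbb R^{3K}$ satisfy, for all $i,j$, $$[\![\mathbf V]\!]_{i+\frac12,j}^\top\mathcal F_{i+\frac12,j}=[\![\mathbf\Psi]\!]_{i+\frac12,j}+g[\![\mathbf B]\!]_{i+\frac12,j}^\top\mathcal P(\overline{\mathbf h}_{i+\frac12,j})\overline{\mathbf u}_{i+\frac12,j},\quad [\![\mathbf V]\!]_{i,j+\frac12}^\top\mathcal G_{i,j+\frac12}=[\![\mathbf\Phi]\!]_{i,j+\frac12}+g[\![\mathbf B]\!]_{i,j+\frac12}^\top\mathcal P(\overline{\mathbf h}_{i,j+\frac12})\overline{\mathbf v}_{i,j+\frac12}.$$ Then the scheme is energy conservative: $\frac{d}{dt}\mathbf E_{i,j}=-\frac{\mathcal H_{i+\frac12,j}-\mathcal H_{i-\frac12,j}}{\Delta x}-\frac{\mathcal K_{i,j+\frac12}-\mathcal K_{i,j-\frac12}}{\Delta y}$ for all $i,j$, with numerical energy fluxes $$\mathcal H_{i+\frac12,j}=\overline{\mathbf V}_{i+\frac12,j}^\top\mathcal F_{i+\frac12,j}-\overline{\mathbf\Psi}_{i+\frac12,j}-\tfrac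 g4[\![\mathbf B]\!]_{i+\frac12,j}^\top\mathcal P(\overline{\mathbf h}_{i+\frac12,j})[\![\mathbf u]\!]_{i+\frac12,j},$$ $$\mathcal K_{i,j+\frac12}=\overline{\mathbf V}_{i,j+\frac12}^\top\mathcal G_{i,j+\frac12}-\overline{\mathbf\Phi}_{i,j+\frac12}-\tfrac g4[\![\mathbf B]\!]_{i,j+\frac12}^\top\mathcal P(\overline{\mathbf h}_{i,j+\frac12})[\![\mathbf v]\!]_{i,j+\frac12}.$$
   Context: Let $\mathcal M_k\in\mathbb R^{K\times K}$, $(\mathcal M_k)_{l,m}=\int\phi_k\phi_l\phi_m\rho$, where $\phi_1\equiv1,\dots,\phi_K$ are polynomials orthonormal with respect to a probability density $\rho$; $\mathcal P(\widehat z)=\sum_k\widehat z_k\mathcal M_k$; $g>0$. Uniform rectangular grid with cell sizes $\Delta x,\Delta y$; cell values $\mathbf U_{i,j}=(\mathbf h_{i,j},\mathbf q^x_{i,j},\mathbf q^y_{i,j})\in\mathbb R^{3K}$ with $\mathcal P(\mathbf h_{i,j})$ positive definite, bottom $\mathbf B_{i,j}\in\mathbb R^K$; $\mathbf u_{i,j}=\mathcal P^{-1}(\mathbf h_{i,j})\mathbf q^x_{i,j}$, $\mathbf v_{i,j}=\mathcal P^{-1}(\mathbf h_{i,j})\mathbf q^y_{i,j}$. Averages/jumps: $\overline{\mathbf a}_{i+\frac12,j}=\tfrac12(\mathbf a_{i,j}+\mathbf a_{i+1,j})$, $[\![\mathbf a]\!]_{i+\frac12,j}=\mathbf a_{i+1,j}-\mathbf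 a_{i,j}$, analogously in $j$. Source: $\mathbf S_{i,j}=\Big(0;\ -\tfrac{g}{2\Delta x}\big(\mathcal P(\overline{\mathbf h}_{i+\frac12,j})[\![\mathbf B]\!]_{i+\frac12,j}+\mathcal P(\overline{\mathbf h}_{i-\frac12,j})[\![\mathbf B]\!]_{i-\frac12,j}\big);\ -\tfrac{g}{2\Delta y}\big(\mathcal P(\overline{\mathbf h}_{i,j+\frac12})[\![\mathbf B]\!]_{i,j+\frac12}+\mathcal P(\overline{\mathbf h}_{i,j-\frac12})[\![\mathbf B]\!]_{i,j-\frac12}\big)\Big)$. Discrete entropy quantities: $\mathbf E_{i,j}=\tfrac12\big((\mathbf q^x_{i,j})^\top\mathbf u_{i,j}+(\mathbf q^y_{i,j})^\top\mathbf v_{i,j}\big)+\tfrac12 g\|\mathbf h_{i,j}\|^2+g\mathbf h_{i,j}^\top\mathbf B_{i,j}$; $\mathbf V_{i,j}=(\partial\mathbf E_{i,j}/\partial\mathbf U_{i,j})^\top=\big(-\tfrac12\mathcal P(\mathbf u_{i,j})\mathbf u_{i,j}-\tfrac12\mathcal P(\mathbf v_{i,j})\mathbf v_{i,j}+g(\mathbf h_{i,j}+\mathbf B_{i,j});\ \mathbf u_{i,j};\ \mathbf v_{i,j}\big)$; $\mathbf\Psi_{i,j}=\tfrac12 g\,\mathbf u_{i,j}^\top\mathcal P(\mathbf h_{i,j})\mathbf h_{i,j}$; $\mathbf\Phi_{i,j}=\tfrac12 g\,\mathbf v_{i,j}^\top\mathcal P(\mathbf h_{i,j})\mathbf h_{i,j}$.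 *)

From HB Require Import structures.
From mathcomp Require Import all_boot all_order all_algebra.
From mathcomp Require Import all_classical all_reals all_analysis.
Set Implicit Arguments. Unset Strict Implicit. Unset Printing Implicit Defensive.
Import Order.TTheory GRing.Theory Num.Theory.
Import numFieldNormedType.Exports.
Local Open Scope classical_set_scope.
Local Open Scope ring_scope.

Section SGDefs.
Variable R : realType.
Variable K : nat.

Definition prob_density (rho : R -> R) : Prop :=
  [/\ measurable_fun setT rho, (forall x, 0 <= rho x) &
      (\int[lebesgue_measure]_(x in setT) (rho x)%:E = 1)%E ].

(* phi_0,...,phi_{K-1} (the paper's phi_1,...,phi_K) are polynomials,
   orthonormal in L^2(rho), with the first one the constant 1. *)
Definition orthonormal_polys (rho : R -> R) (phi : 'I_K -> {poly R}) : Prop :=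
  (forall k l : 'I_K,
     lebesgue_measure.-integrable setT
        (fun x => ((phi k).[x] * (phi l).[x] * rho x)%:E) /\
     \int[lebesgue_measure]_(x in setT) ((phi k).[x] * (phi l).[x] * rho x)
       = (k == l)%:R)
  /\ (forall k : 'I_K, val k = 0%N -> phi k = 1).

Definition Mtens (rho : R -> R) (phi : 'I_K -> {poly R}) (k : 'I_K) : 'M[R]_K :=
  \matrix_(l, m) \int[lebesgue_measure]_(x in setT)
                    ((phi k).[x] * (phi l).[x] * (phi m).[x] * rho x).

Variable M : 'I_K -> 'M[R]_K.
Variable g : R.

Definition Pm (z : 'cV[R]_K) : 'M[R]_K := \sum_(k < K) (z k 0) *: M k.

Definition dotv n (a b : 'cV[R]_n) : R := (a^T *m b) 0 0.

Definition posdef n (A : 'M[R]_n) : Prop :=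
  forall x : 'cV[R]_n, x != 0 -> 0 < dotv x (A *m x).

Definition vel (h q : 'cV[R]_K) : 'cV[R]_K := invmx (Pm h) *m q.

Definition stateU (h qx qy : 'cV[R]_K) : 'cV[R]_(K + (K + K)) :=
  col_mx h (col_mx qx qy).

Definition energy (h qx qy B : 'cV[R]_K) : R :=
  2^-1 * (dotv qx (vel h qx) + dotv qy (vel h qy))
  + 2^-1 * g * dotv h h + g * dotv h B.

Definition entvar (h qx qy B : 'cV[R]_K) : 'cV[R]_(K + (K + K)) :=
  let u := vel h qx in let v := vel h qy in
  col_mx (- (2^-1 *: (Pm u *m u)) - 2^-1 *: (Pm v *m v) + g *: (h + B))
         (col_mx u v).

(* Psi (with q = q^x) and Phi (with q = q^y) *)
Definition entflux (h q : 'cV[R]_K) : R := 2^-1 * g * dotv (vel h q) (Pm h *m h).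

Section Grid.
Variables (h qx qy : int -> int -> R -> 'cV[R]_K) (B : int -> int -> 'cV[R]_K).

Definition uG i j t := vel (h i j t) (qx i j t).
Definition vG i j t := vel (h i j t) (qy i j t).
Definition UG i j t := stateU (h i j t) (qx i j t) (qy i j t).
Definition EG i j t := energy (h i j t) (qx i j t) (qy i j t) (B i j).
Definition VG i j t := entvar (h i j t) (qx i j t) (qy i j t) (B i j).
Definition PsiG i j t := entflux (h i j t) (qx i j t).
Definition PhiG i j t := entflux (h i j t) (qy i j t).

(* interface x_{i+1/2,j} is between cells (i,j) and (i+1,j);
   interface y_{i,j+1/2} is between cells (i,j) and (i,j+1). *)
Definition avgx n (a : int -> int -> 'cV[R]_n) i j := 2^-1 *: (a i j + a (i + 1)%R j).
Definition jmpx n (a : int -> int -> 'cV[R]_n) i j := a (i + 1)%R j - a i j.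
Definition avgy n (a : int -> int -> 'cV[R]_n) i j := 2^-1 *: (a i j + a i (j + 1)%R).
Definition jmpy n (a : int -> int -> 'cV[R]_n) i j := a i (j + 1)%R - a i j.
Definition avgxs (a : int -> int -> R) i j : R := 2^-1 * (a i j + a (i + 1)%R j).
Definition jmpxs (a : int -> int -> R) i j : R := a (i + 1)%R j - a i j.
Definition avgys (a : int -> int -> R) i j : R := 2^-1 * (a i j + a i (j + 1)%R).
Definition jmpys (a : int -> int -> R) i j : R := a i (j + 1)%R - a i j.

Definition srcS (dx dy : R) i j t : 'cV[R]_(K + (K + K)) :=
  let ht := fun a b => h a b t in
  col_mx 0
   (col_mx
     (- (g / (2 * dx)) *:
        (Pm (avgx ht i j) *m jmpx B i j + Pm (avgx ht (i - 1)%R j) *m jmpx B (i - 1)%R j))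
     (- (g / (2 * dy)) *:
        (Pm (avgy ht i j) *m jmpy B i j + Pm (avgy ht i (j - 1)%R) *m jmpy B i (j - 1)%R))).

(* numerical energy fluxes; F i j t = F_{i+1/2,j}(t), G i j t = G_{i,j+1/2}(t) *)
Definition HfluxG (F : int -> int -> R -> 'cV[R]_(K + (K + K))) i j t : R :=
  dotv (avgx (fun a b => VG a b t) i j) (F i j t)
  - avgxs (fun a b => PsiG a b t) i j
  - g / 4 * dotv (jmpx B i j)
              (Pm (avgx (fun a b => h a b t) i j) *m jmpx (fun a b => uG a b t) i j).

Definition KfluxG (G : int -> int -> R -> 'cV[R]_(K + (K + K))) i j t : R :=
  dotv (avgy (fun a b => VG a b t) i j) (G i j t)
  - avgys (fun a b => PhiG a b t) i j
  - g / 4 * dotv (jmpy B i j)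
              (Pm (avgy (fun a b => h a b t) i j) *m jmpy (fun a b => vG a b t) i j).

End Grid.
End SGDefs.

(* The entropy variables V are the gradient of the energy E in the conserved variables
   U = (h, q^x, q^y): differentiating q^T P(h)^{-1} q produces u^T P(h') u, which equals
   h'^T P(u) u because the Galerkin tensor (M_k)_{l,m} is fully symmetric.  Hence
   dE/dt = V^T dU/dt.  On each axis write V_{i,j} = avg V - jump V / 2 at the interface
   i+1/2 and avg V + jump V / 2 at i-1/2; the entropy-conservation condition turns the
   jump terms into jumps of Psi plus g [[B]]^T P(avg h) avg u.  Splitting avg u around
   u_{i,j}, one half of the latter is the g/4 term of the energy flux and the other
   cancels u_{i,j}^T S_{i,j}, leaving the difference of the energy fluxes H (resp. K). *)

From HB Require Import structures.
From mathcomp Require Import all_boot all_order all_algebra.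
From mathcomp Require Import all_classical all_reals all_analysis.
From mathcomp Require Import perm ring.
Import Order.TTheory GRing.Theory Num.Theory.
Import numFieldNormedType.Exports.
Set Implicit Arguments. Unset Strict Implicit.
Local Open Scope ring_scope.

Section MatrixDerivative.
Variables (R : realFieldType) (V : normedModType R) (x v : V).

Lemma is_derive_mxP m n (f : V -> 'M[R]_(m, n)) df :
  is_derive x v f df <-> forall i j, is_derive x v (fun y => f y i j) (df i j).
Proof.
split=> [[fd <-] i j | fd].
  have /derivable_mxP/(_ i j) fijd := fd.
  by apply: DeriveDef => //; rewrite derive_mx // mxE.
have dfd : derivable f x v by apply/derivable_mxP => i j; case: (fd i j).
apply: DeriveDef => //; rewrite derive_mx //.
by apply/matrixP => i j; rewrite mxE derive_val.
Qed.

Lemma derivable_det n (A : V -> 'M[R]_n) :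
  (forall i j, derivable (fun y => A y i j) x v) ->
  derivable (fun y => \det (A y)) x v.
Proof.
move=> Ad.
have -> : (fun y => \det (A y)) =
    \sum_(s : 'S_n) (fun y => (-1) ^+ s * \prod_i A y i (s i)).
  by apply/funext => y; rewrite fct_sumE.
apply: (big_ind (fun f => derivable f x v)) => [|f g|s _];
  [exact: derivable_cst|exact: derivableD|].
apply: derivableM; first exact: derivable_cst.
have -> : (fun y => \prod_i A y i (s i)) = \prod_i (fun y => A y i (s i)).
  by apply/funext => y; rewrite fct_prodE.
by apply: (big_ind (fun f => derivable f x v)) => [|f g|i _];
  [exact: derivable_cst|exact: derivableM|].
Qed.

Lemma is_derive_mulmx m n p (f : V -> 'M[R]_(m, n)) (g : V -> 'M[R]_(n, p)) df dg :
  is_derive x v f df -> is_derive x v g dg ->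
  is_derive x v (fun y => f y *m g y) (df *m g x + f x *m dg).
Proof.
move=> /is_derive_mxP fd /is_derive_mxP gd; apply/is_derive_mxP => i j.
have -> : (fun y => (f y *m g y) i j) = \sum_k (fun y => f y i k * g y k j).
  by apply/funext => y; rewrite fct_sumE mxE.
apply: is_derive_eq; rewrite !mxE -big_split; apply: eq_bigr => k _ /=.
by rewrite addrC; congr (_ + _); exact: mulrC.
Qed.

Lemma is_derive_trmx m n (f : V -> 'M[R]_(m, n)) df :
  is_derive x v f df -> is_derive x v (fun y => (f y)^T) df^T.
Proof.
move=> /is_derive_mxP fd; apply/is_derive_mxP => i j.
by rewrite mxE; under eq_fun do rewrite mxE.
Qed.

Lemma is_derive_col_mx_split m1 m2 n (a : V -> 'M[R]_(m1, n)) (b : V -> 'M[R]_(m2, n)) da db :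
  is_derive x v (fun y => col_mx (a y) (b y)) (col_mx da db) ->
  is_derive x v a da /\ is_derive x v b db.
Proof.
move=> /is_derive_mxP abd; split; apply/is_derive_mxP => i j.
- by have := abd (lshift m2 i) j; rewrite col_mxEu; under eq_fun do rewrite col_mxEu.
- by have := abd (rshift m1 i) j; rewrite col_mxEd; under eq_fun do rewrite col_mxEd.
Qed.

Lemma derivable_invmx n (A : V -> 'M[R]_n) :
  (forall y, A y \in unitmx) -> derivable A x v ->
  derivable (fun y => invmx (A y)) x v.
Proof.
move=> Au /derivable_mxP Ad; apply/derivable_mxP => i j.
have -> : (fun y => invmx (A y) i j) =
    (fun y => (\det (A y))^-1 * ((-1) ^+ (j + i) * \det (row' j (col' i (A y))))).
  by apply/funext => y; rewrite /invmx Au !mxE.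
apply: derivableM; first apply: derivableV.
- by rewrite -unitfE -unitmxE.
- exact: derivable_det.
apply: derivableM; first exact: derivable_cst.
apply: derivable_det => k l; under eq_fun do rewrite !mxE; exact: Ad.
Qed.

Lemma is_derive_invmx n (A : V -> 'M[R]_n) dA :
  (forall y, A y \in unitmx) -> is_derive x v A dA ->
  is_derive x v (fun y => invmx (A y)) (- (invmx (A x) *m dA *m invmx (A x))).
Proof.
move=> Au Ad.
have /derivableP Wd : derivable (fun y => invmx (A y)) x v.
  by apply: derivable_invmx => //; case: Ad.
set dW := 'D_v _ x in Wd.
have AWd := is_derive_mulmx Ad Wd.
have AW1 : (fun y => A y *m invmx (A y)) = cst 1%:M by apply/funext => y; rewrite mulmxV.
have : dA *m invmx (A x) + A x *m dW = 0.
  by rewrite -(@derive_val _ _ _ _ _ _ _ AWd) AW1 derive_cst.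
move/eqP; rewrite addrC addr_eq0 => /eqP AdW.
suff -> : - (invmx (A x) *m dA *m invmx (A x)) = dW by [].
by rewrite -[dW]mul1mx -(mulVmx (Au x)) -[RHS]mulmxA AdW mulmxN mulmxA.
Qed.

End MatrixDerivative.

Section DotProduct.
Variable R : realType.

Lemma dotvE n (a b : 'cV[R]_n) : dotv a b = \sum_k a k 0 * b k 0.
Proof. by rewrite /dotv mxE; apply: eq_bigr => k _; rewrite mxE. Qed.

Lemma dotvC n (a b : 'cV[R]_n) : dotv a b = dotv b a.
Proof. by rewrite !dotvE; apply: eq_bigr => k _; rewrite mulrC. Qed.

Lemma dotvDl n (a b c : 'cV[R]_n) : dotv (a + b) c = dotv a c + dotv b c.
Proof. by rewrite /dotv linearD /= mulmxDl mxE. Qed.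

Lemma dotvDr n (a b c : 'cV[R]_n) : dotv c (a + b) = dotv c a + dotv c b.
Proof. by rewrite /dotv mulmxDr mxE. Qed.

Lemma dotvZl n k (a c : 'cV[R]_n) : dotv (k *: a) c = k * dotv a c.
Proof. by rewrite /dotv linearZ /= -scalemxAl mxE. Qed.

Lemma dotvZr n k (a c : 'cV[R]_n) : dotv c (k *: a) = k * dotv c a.
Proof. by rewrite /dotv -scalemxAr mxE. Qed.

Lemma dotvNr n (a c : 'cV[R]_n) : dotv c (- a) = - dotv c a.
Proof. by rewrite -scaleN1r dotvZr mulN1r. Qed.

Lemma dotvNl n (a c : 'cV[R]_n) : dotv (- a) c = - dotv a c.
Proof. by rewrite -scaleN1r dotvZl mulN1r. Qed.

Lemma dotvBl n (a b c : 'cV[R]_n) : dotv (a - b) c = dotv a c - dotv b c.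
Proof. by rewrite dotvDl dotvNl. Qed.

Lemma dotvBr n (a b c : 'cV[R]_n) : dotv c (a - b) = dotv c a - dotv c b.
Proof. by rewrite dotvDr dotvNr. Qed.

Lemma dotv0r n (a : 'cV[R]_n) : dotv a 0 = 0.
Proof. by rewrite /dotv mulmx0 mxE. Qed.

Lemma dotv_mulmxr n (P : 'M[R]_n) (a b : 'cV[R]_n) : dotv a (P *m b) = dotv (P^T *m a) b.
Proof. by rewrite /dotv trmx_mul trmxK mulmxA. Qed.

Lemma dotv_col_mx m n (a c : 'cV[R]_m) (b d : 'cV[R]_n) :
  dotv (col_mx a b) (col_mx c d) = dotv a c + dotv b d.
Proof. by rewrite /dotv tr_col_mx mul_row_col mxE. Qed.

Lemma is_derive_dotv (V : normedModType R) (x v : V) n (a b : V -> 'cV[R]_n) da db :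
  is_derive x v a da -> is_derive x v b db ->
  is_derive x v (fun y => dotv (a y) (b y)) (dotv da (b x) + dotv (a x) db).
Proof.
move=> ad bd; have /is_derive_mxP/(_ 0 0) := is_derive_mulmx (is_derive_trmx ad) bd.
by rewrite mxE.
Qed.

Lemma posdef_unitmx n (A : 'M[R]_n) : posdef A -> A \in unitmx.
Proof.
move=> Apd; rewrite unitmxE unitfE -det_tr; apply/negP => /det0P [w w0 wA].
have /Apd : w^T != 0 by rewrite trmx_eq0.
by rewrite -[A]trmxK -trmx_mul wA trmx0 dotv0r ltxx.
Qed.

End DotProduct.

Lemma Mtens_swap12 (R : realType) K rho phi (k l m : 'I_K) :
  @Mtens R K rho phi k l m = Mtens rho phi l k m.
Proof. by rewrite !mxE; congr (Rintegral _ _ _); apply/funext => y; ring. Qed.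

Lemma Mtens_swap23 (R : realType) K rho phi (k l m : 'I_K) :
  @Mtens R K rho phi k l m = Mtens rho phi k m l.
Proof. by rewrite !mxE; congr (Rintegral _ _ _); apply/funext => y; ring. Qed.

Section SymmetricTensor.
Variables (R : realType) (K : nat) (M : 'I_K -> 'M[R]_K).

Lemma PmE z l m : Pm M z l m = \sum_k z k 0 * M k l m.
Proof. by rewrite summxE; apply: eq_bigr => k _; rewrite mxE. Qed.

Lemma is_derive_Pm (V : normedModType R) (x v : V) (H : V -> 'cV[R]_K) dH :
  is_derive x v H dH -> is_derive x v (fun y => Pm M (H y)) (Pm M dH).
Proof.
move=> /is_derive_mxP Hd; apply/is_derive_mxP => l m.
have -> : (fun y => Pm M (H y) l m) = \sum_k (fun y => H y k 0 * M k l m).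
  by apply/funext => y; rewrite fct_sumE PmE.
apply: is_derive_eq; rewrite PmE; apply: eq_bigr => k _ /=.
by rewrite scaler0 add0r mulrC.
Qed.

Lemma dotv_Pm_mulmx c z a :
  dotv c (Pm M z *m a) = \sum_k \sum_l \sum_m z k 0 * c l 0 * a m 0 * M k l m.
Proof.
transitivity (\sum_l \sum_m \sum_k z k 0 * c l 0 * a m 0 * M k l m).
  rewrite dotvE; apply: eq_bigr => l _; rewrite mxE big_distrr; apply: eq_bigr => m _ /=.
  by rewrite PmE big_distrl big_distrr; apply: eq_bigr => k _ /=; ring.
by under eq_bigr do rewrite exchange_big; rewrite exchange_big.
Qed.

Hypotheses (M_swap12 : forall k l m, M k l m = M l k m)
           (M_swap23 : forall k l m, M k l m = M k m l).

Lemma tr_Pm z : (Pm M z)^T = Pm M z.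
Proof. by apply/matrixP => l m; rewrite mxE !PmE; apply: eq_bigr => k _; rewrite M_swap23. Qed.

Lemma dotv_Pm_swap u z : dotv u (Pm M z *m u) = dotv z (Pm M u *m u).
Proof.
rewrite !dotv_Pm_mulmx [RHS]exchange_big; apply: eq_bigr => k _; apply: eq_bigr => l _.
by apply: eq_bigr => m _; rewrite M_swap12; ring.
Qed.

End SymmetricTensor.

Section EnergyDerivative.
Variables (R : realType) (K : nat) (M : 'I_K -> 'M[R]_K) (g : R).
Hypotheses (M_swap12 : forall k l m, M k l m = M l k m)
           (M_swap23 : forall k l m, M k l m = M k m l).
Variables (V : normedModType R) (x v : V).

Lemma is_derive_dotv_vel (H Q : V -> 'cV[R]_K) dH dQ :
  (forall y, Pm M (H y) \in unitmx) -> is_derive x v H dH -> is_derive x v Q dQ ->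
  let u := vel M (H x) (Q x) in
  is_derive x v (fun y => dotv (Q y) (vel M (H y) (Q y)))
    (2 * dotv u dQ - dotv dH (Pm M u *m u)).
Proof.
move=> Hu Hd Qd u.
have Wd := is_derive_invmx Hu (is_derive_Pm M Hd).
apply: is_derive_eq; first exact: is_derive_dotv Qd (is_derive_mulmx Wd Qd).
rewrite -/u; set W := invmx (Pm M (H x)).
have WQ y : dotv (Q x) (W *m y) = dotv u y by rewrite dotv_mulmxr trmx_inv tr_Pm.
rewrite mulNmx -!mulmxA dotvDr dotvNr !WQ -/(vel M _ _) -/u dotv_Pm_swap // (dotvC dQ).
by ring.
Qed.

Lemma is_derive_energy (H X Y : V -> 'cV[R]_K) (Bc : 'cV[R]_K) dU :
  (forall y, Pm M (H y) \in unitmx) ->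
  is_derive x v (fun y => stateU (H y) (X y) (Y y)) dU ->
  is_derive x v (fun y => energy M g (H y) (X y) (Y y) Bc)
    (dotv (entvar M g (H x) (X x) (Y x) Bc) dU).
Proof.
move=> Hu; rewrite -[dU]vsubmxK -[dsubmx dU]vsubmxK.
move: (usubmx dU) (usubmx (dsubmx dU)) (dsubmx (dsubmx dU)) => dH dX dY.
move=> /is_derive_col_mx_split[Hd /is_derive_col_mx_split[Xd Yd]].
have Kx := is_derive_dotv_vel Hu Hd Xd; have Ky := is_derive_dotv_vel Hu Hd Yd.
have HH := is_derive_dotv Hd Hd; have HB := is_derive_dotv Hd (is_derive_cst Bc x v).
apply: is_derive_eq; rewrite /entvar !dotv_col_mx.
rewrite !(dotvDl, dotvBl, dotvNl, dotvZl) dotv0r /cst.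
by rewrite !(dotvC dH) -![_ *: _]/(_ * _); field.
Qed.

End EnergyDerivative.

Section AxisEnergyBalance.
Variables (R : realType) (n K : nat) (g : R).
Variables (W F : int -> 'cV[R]_n) (psi : int -> R) (u b : int -> 'cV[R]_K) (P : int -> 'M[R]_K).
Hypothesis P_sym : forall i, (P i)^T = P i.
Hypothesis entropy_conservative : forall i,
  dotv (W (i + 1) - W i) (F i)
  = psi (i + 1) - psi i + g * dotv (b i) (P i *m (2^-1 *: (u i + u (i + 1)))).

(* Along one grid line, [W], [psi], [u] are V, Psi (or Phi), u (or v) at the cells,
   while [F i], [b i] and [P i] are the numerical flux, the jump of the bottom and
   P(avg h) at the interface i+1/2; [axis_energy_flux i] is then H (or K) there. *)
Definition axis_energy_flux i : R :=
  dotv (2^-1 *: (W i + W (i + 1))) (F i) - 2^-1 * (psi i + psi (i + 1))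
  - g / 4 * dotv (b i) (P i *m (u (i + 1) - u i)).

Lemma dotv_flux_left i :
  dotv (W i) (F i) = axis_energy_flux i + psi i - g / 2 * dotv (u i) (P i *m b i).
Proof.
have -> : W i = 2^-1 *: (W i + W (i + 1)) - 2^-1 *: (W (i + 1) - W i).
  by apply/matrixP => k l; rewrite !mxE; field.
rewrite /axis_energy_flux dotvBl !dotvZl entropy_conservative.
rewrite [dotv (u i) _]dotv_mulmxr P_sym (dotvC _ (b i)).
by rewrite -!scalemxAr !(mulmxBr, mulmxDr, dotvZr, dotvBr, dotvDr); field.
Qed.

Lemma dotv_flux_right i :
  dotv (W (i + 1)) (F i)
  = axis_energy_flux i + psi (i + 1) + g / 2 * dotv (u (i + 1)) (P i *m b i).
Proof.
have -> : W (i + 1) = 2^-1 *: (W i + W (i + 1)) + 2^-1 *: (W (i + 1) - W i).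
  by apply/matrixP => k l; rewrite !mxE; field.
rewrite /axis_energy_flux dotvDl !dotvZl entropy_conservative.
rewrite [dotv (u _) _]dotv_mulmxr P_sym (dotvC _ (b i)).
by rewrite -!scalemxAr !(mulmxBr, mulmxDr, dotvZr, dotvBr, dotvDr); field.
Qed.

Lemma axis_energy_balance (dx : R) i : dx != 0 ->
  dotv (W i) (- (dx^-1 *: (F i - F (i - 1))))
  + dotv (u i) (- (g / (2 * dx)) *: (P i *m b i + P (i - 1) *m b (i - 1)))
  = - ((axis_energy_flux i - axis_energy_flux (i - 1)) / dx).
Proof.
move=> dx0; have := dotv_flux_right (i - 1); rewrite subrK => right_flux.
rewrite dotvNr dotvZr dotvBr dotv_flux_left right_flux dotvZr dotvDr.
by field.
Qed.

End AxisEnergyBalance.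

Theorem lemma4p4 (R : realType) (K : nat)
  (rho : R -> R) (phi : 'I_K -> {poly R}) (g dx dy : R)
  (h qx qy : int -> int -> R -> 'cV[R]_K) (B : int -> int -> 'cV[R]_K)
  (F G : int -> int -> R -> 'cV[R]_(K + (K + K))) :
  (0 < K)%N ->
  prob_density rho -> orthonormal_polys rho phi ->
  0 < g -> 0 < dx -> 0 < dy ->
  let M := Mtens rho phi in
  (forall (i j : int) (t : R), posdef (Pm M (h i j t))) ->
  (* the semi-discrete scheme *)
  (forall (i j : int) (t : R),
     is_derive t 1 (UG h qx qy i j)
       (- (dx^-1 *: (F i j t - F (i - 1)%R j t))
        - dy^-1 *: (G i j t - G i (j - 1)%R t)
        + srcS M g h B dx dy i j t)) ->
  (* entropy-conservative flux conditions *)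
  (forall (i j : int) (t : R),
     dotv (jmpx (fun a b => VG M g h qx qy B a b t) i j) (F i j t)
     = jmpxs (fun a b => PsiG M g h qx a b t) i j
       + g * dotv (jmpx B i j)
               (Pm M (avgx (fun a b => h a b t) i j)
                *m avgx (fun a b => uG M h qx a b t) i j)) ->
  (forall (i j : int) (t : R),
     dotv (jmpy (fun a b => VG M g h qx qy B a b t) i j) (G i j t)
     = jmpys (fun a b => PhiG M g h qy a b t) i j
       + g * dotv (jmpy B i j)
               (Pm M (avgy (fun a b => h a b t) i j)
                *m avgy (fun a b => vG M h qy a b t) i j)) ->
  (* energy conservation *)
  forall (i j : int) (t : R),
    is_derive t 1 (EG M g h qx qy B i j)
      (- ((HfluxG M g h qx qy B F i j t - HfluxG M g h qx qy B F (i - 1)%R j t) / dx)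
       - (KfluxG M g h qx qy B G i j t - KfluxG M g h qx qy B G i (j - 1)%R t) / dy).
Proof.
move=> _ _ _ _ dx_gt0 dy_gt0 M Pm_posdef scheme x_flux y_flux i j t.
have M_swap12 k l m : M k l m = M l k m by exact: Mtens_swap12.
have M_swap23 k l m : M k l m = M k m l by exact: Mtens_swap23.
have Pm_sym z : (Pm M z)^T = Pm M z by exact: tr_Pm.
have energy_rate := is_derive_energy g M_swap12 M_swap23 (B i j)
  (fun s => posdef_unitmx (Pm_posdef i j s)) (scheme i j t).
apply: (is_derive_eq energy_rate).
have x_balance := axis_energy_balance (fun _ => Pm_sym _)
  (fun a => x_flux a j t) i (lt0r_neq0 dx_gt0).
have y_balance := axis_energy_balance (fun _ => Pm_sym _)
  (fun b => y_flux i b t) j (lt0r_neq0 dy_gt0).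
rewrite /srcS dotvDr dotvBr !dotv_col_mx dotv0r add0r addrACA -dotvNr.
by rewrite x_balance y_balance.
Qed.
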